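(* Let $\Gamma$ be a finite, compact, connected, bipartite metric graph with first Betti number $\beta$, and let $B\subset\partial\Gamma$ be nonempty. Then $$\lambda_{k+\beta+|B|-1}\big(L^{\rm a/st,N}(\Gamma,B)\big)=\lambda_k\big(L^{\rm st,D}(\Gamma,B)\big)\qquad\text{for all }k\in\mathbb N.$$
   Context: A finite compact metric graph $\Gamma$ consists of finitely many edges $e_n=[x_{2n-1},x_{2n}]\subset\mathbb R$, $n=1,\dots,E$, of positive lengths and a vertex set $\mathcal V=\{v_1,\dots,v_V\}$ which is a partition of the set of all edge endpoints; the degree of a vertex is the number of endpoints it contains (loops count twice); $\partial\Gamma$ is the set of vertices of degree one; $\beta=E-V+1$. $\Gamma$ is bipartite if $\mathcal V=\mathcal V_1\sqcup\mathcal V_2$ with every edge having one endpoint in a vertex of $\mathcal V_1$ and the other in a vertex of $\mathcal V_2$. $f(x_j)$ denotes the limit of $f$ at endpoint $x_j$, and $\partial f(x_j)=f'(x_j)$ if $x_j$ is a left endpoint, $-f'(x_j)$ if a right endpoint. $L^{\rm st,D}(\Gamma,B)$ acts as $-f''$ on each edge with domain all $f\in W^2_2(\Gamma\setminus\mathcal V)=\bigoplus_nW^2_2(e_n)$ satisfying $f=0$ at each vertex of $B$ and standard conditions ($f(x_i)=f(x_j)$ for $x_i,x_j\in v$, $\sum_{x_j\in v}\partial f(x_j)=0$) at all other vertices $v$. $L^{\rm a/st,N}(\Gamma,B)$ acts as $-f''$ with domain all $f\in W^2_2(\Gamma\setminus\mathcal V)$ satisfying $\partial f=0$ at each vertex of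 $B$ and anti-standard conditions ($\sum_{x_j\in v}f(x_j)=0$, $\partial f(x_i)=\partial f(x_j)$ for $x_i,x_j\in v$) at all other vertices $v$. Eigenvalues $\lambda_1\le\lambda_2\le\dots$ are counted with multiplicities. *)

From Stdlib Require Import Reals Lra Lia Arith List Relations.
Import ListNotations.
Open Scope R_scope.

(* Edges are indexed 0..E-1 (0-based);
   edge n is the interval [a n, b n] with a n < b n.  Endpoints are indexed
   0..2E-1: endpoint 2n is the left endpoint a n of edge n, endpoint 2n+1 is
   the right endpoint b n.  The vertex set is {0..V-1}; vtx j is the vertex
   (block of the partition) containing endpoint j. *)
Record MetricGraph := {
  nE : nat;
  nV : nat;
  ea : nat -> R;
  eb : nat -> R;
  vtx : nat -> nat;
  edge_pos : forall n, (n < nE)%nat -> ea n < eb n;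
  vtx_range : forall j, (j < 2 * nE)%nat -> (vtx j < nV)%nat;
  vtx_onto : forall v, (v < nV)%nat -> exists j, (j < 2 * nE)%nat /\ vtx j = v
}.

Definition endpoints (G : MetricGraph) : list nat := seq 0 (2 * nE G).

Definition at_v (G : MetricGraph) (v : nat) : list nat :=
  filter (fun j => Nat.eqb (vtx G j) v) (endpoints G).

Definition degree (G : MetricGraph) (v : nat) : nat := length (at_v G v).

Definition adj (G : MetricGraph) (u w : nat) : Prop :=
  exists n, (n < nE G)%nat /\
    ((vtx G (2 * n) = u /\ vtx G (2 * n + 1) = w) \/
     (vtx G (2 * n) = w /\ vtx G (2 * n + 1) = u)).

Definition connected (G : MetricGraph) : Prop :=
  forall u w, (u < nV G)%nat -> (w < nV G)%nat -> clos_refl_trans nat (adj G) u w.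

Definition bipartite (G : MetricGraph) : Prop :=
  exists col : nat -> bool, forall n, (n < nE G)%nat ->
    col (vtx G (2 * n)) <> col (vtx G (2 * n + 1)).

(* first Betti number E - V + 1 (nonnegative for connected graphs) *)
Definition betti (G : MetricGraph) : nat := (nE G + 1 - nV G)%nat.

Definition cardB (G : MetricGraph) (B : nat -> bool) : nat :=
  length (filter B (seq 0 (nV G))).

Definition Rsum (l : list R) : R := fold_right Rplus 0 l.

(* A function on the graph: f n is the function on edge n.
   f(x_j): limit value at endpoint j. *)
Definition ev (G : MetricGraph) (f : nat -> R -> R) (j : nat) : R :=
  if Nat.even j then f (Nat.div2 j) (ea G (Nat.div2 j))
  else f (Nat.div2 j) (eb G (Nat.div2 j)).

(* ∂f(x_j), where g n is the derivative of f n *)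
Definition dev (G : MetricGraph) (g : nat -> R -> R) (j : nat) : R :=
  if Nat.even j then g (Nat.div2 j) (ea G (Nat.div2 j))
  else - g (Nat.div2 j) (eb G (Nat.div2 j)).

(* vertex conditions, as predicates on (f, f') *)
Definition VCond := (nat -> R -> R) -> (nat -> R -> R) -> Prop.

(* L^{st,D}(Γ,B): Dirichlet on B, standard elsewhere *)
Definition StD (G : MetricGraph) (B : nat -> bool) : VCond := fun f g =>
  forall v, (v < nV G)%nat ->
    (B v = true -> forall j, In j (at_v G v) -> ev G f j = 0) /\
    (B v = false ->
       (forall i j, In i (at_v G v) -> In j (at_v G v) -> ev G f i = ev G f j) /\
       Rsum (map (dev G g) (at_v G v)) = 0).

(* L^{a/st,N}(Γ,B): Neumann on B, anti-standard elsewhere *)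
Definition AstN (G : MetricGraph) (B : nat -> bool) : VCond := fun f g =>
  forall v, (v < nV G)%nat ->
    (B v = true -> forall j, In j (at_v G v) -> dev G g j = 0) /\
    (B v = false ->
       Rsum (map (ev G f) (at_v G v)) = 0 /\
       (forall i j, In i (at_v G v) -> In j (at_v G v) -> dev G g i = dev G g j)).

(* -f'' = lam f on each edge, with g = f' (solutions are taken on the whole
   line, i.e. the unique smooth extension of the edge solution). *)
Definition solves (G : MetricGraph) (lam : R) (f g : nat -> R -> R) : Prop :=
  forall n x, (n < nE G)%nat ->
    derivable_pt_lim (f n) x (g n x) /\ derivable_pt_lim (g n) x (- lam * f n x).

Definition is_eigenpair (G : MetricGraph) (C : VCond) (lam : R) (f g : nat -> R -> R) : Prop :=
  solves G lam f g /\ C f g.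

Definition lin_indep (G : MetricGraph) (k : nat) (fs : nat -> nat -> R -> R) : Prop :=
  forall c : nat -> R,
    (forall n x, (n < nE G)%nat -> ea G n <= x <= eb G n ->
        Rsum (map (fun i => c i * fs i n x) (seq 0 k)) = 0) ->
    forall i, (i < k)%nat -> c i = 0.

(* N(lam) >= k: the eigenvalues <= lam, counted with multiplicity, number at least k *)
Definition count_ge (G : MetricGraph) (C : VCond) (lam : R) (k : nat) : Prop :=
  exists (mu : nat -> R) (fs gs : nat -> nat -> R -> R),
    (forall i, (i < k)%nat -> mu i <= lam /\ is_eigenpair G C (mu i) (fs i) (gs i)) /\
    lin_indep G k fs.

(* lam = lambda_k (k >= 1), eigenvalues counted with multiplicities *)
Definition is_kth_eigenvalue (G : MetricGraph) (C : VCond) (k : nat) (lam : R) : Prop :=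
  count_ge G C lam k /\ forall mu, mu < lam -> ~ count_ge G C mu k.

(* Fix a 2-colouring of Γ and let σ = ±1 on each edge be the colour of its left
   endpoint.  For λ ≠ 0, (f, f') ↦ (σ f', -λ σ f) maps eigenpairs of L^{st,D} to
   eigenpairs of L^{a/st,N} with the same eigenvalue, with inverse
   (h, h') ↦ (-σ h'/λ, σ h): since colours alternate along every edge, σ matches
   the orientation sign of ∂, so standard and anti-standard (and Dirichlet and
   Neumann) conditions are exchanged.  A Green-formula (energy) argument shows
   that L^{st,D} has no eigenvalue ≤ 0 (using connectivity and B ≠ ∅), and that
   the 0-eigenfunctions of L^{a/st,N} are the edgewise constants whose endpoint
   sums vanish at every vertex outside B.  These form the orthogonal complement
   of the rows of the incidence matrix of V∖B, which are independent, so this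
   kernel has dimension E - (V - |B|) = β + |B| - 1.  Hence "at least k
   eigenvalues ≤ μ" for L^{st,D} is equivalent to "at least k + β + |B| - 1
   eigenvalues ≤ μ" for L^{a/st,N}, which is the theorem. *)

From Stdlib Require Import Reals Lra Lia Arith List Relations.
From mathcomp Require all_boot all_algebra Rstruct.

Import ListNotations.
Open Scope R_scope.

Lemma Rsum_app l1 l2 : Rsum (l1 ++ l2) = Rsum l1 + Rsum l2.
Proof. induction l1; simpl; [lra | rewrite IHl1; lra]. Qed.

Lemma Rsum_ext {A} (l : list A) F G : (forall x, In x l -> F x = G x) ->
  Rsum (map F l) = Rsum (map G l).
Proof.
  induction l; intros H; simpl; auto.
  rewrite H by (left; auto). rewrite IHl; auto. intros; apply H; right; auto.
Qed.

Lemma Rsum_add {A} (l : list A) F G :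
  Rsum (map (fun x => F x + G x) l) = Rsum (map F l) + Rsum (map G l).
Proof. induction l; simpl; [lra | rewrite IHl; lra]. Qed.

Lemma Rsum_scal {A} (l : list A) c F :
  Rsum (map (fun x => c * F x) l) = c * Rsum (map F l).
Proof. induction l; simpl; [lra | rewrite IHl; lra]. Qed.

Lemma Rsum_scal_r {A} (l : list A) c F :
  Rsum (map (fun x => F x * c) l) = Rsum (map F l) * c.
Proof. induction l; simpl; [lra | rewrite IHl; lra]. Qed.

Lemma Rsum_opp {A} (l : list A) F :
  Rsum (map (fun x => - F x) l) = - Rsum (map F l).
Proof. induction l; simpl; [lra | rewrite IHl; lra]. Qed.

Lemma Rsum_zero {A} (l : list A) F : (forall x, In x l -> F x = 0) -> Rsum (map F l) = 0.
Proof.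
  intros H. rewrite (Rsum_ext l F (fun _ => 0)) by auto.
  clear H; induction l; simpl; [lra | rewrite IHl; lra].
Qed.

Lemma Rsum_nonneg {A} (l : list A) F : (forall x, In x l -> 0 <= F x) -> 0 <= Rsum (map F l).
Proof.
  induction l; simpl; intros H; [lra |].
  assert (0 <= F a) by (apply H; auto). assert (0 <= Rsum (map F l)) by (apply IHl; auto). lra.
Qed.

Lemma Rsum_nonneg_zero {A} (l : list A) F : (forall x, In x l -> 0 <= F x) ->
  Rsum (map F l) = 0 -> forall x, In x l -> F x = 0.
Proof.
  induction l; simpl; intros H H0 x Hx; [contradiction |].
  assert (0 <= F a) by (apply H; auto).
  assert (0 <= Rsum (map F l)) by (apply Rsum_nonneg; auto).
  destruct Hx as [<- | Hx]; [lra |]. apply IHl; auto. lra.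
Qed.

Lemma Rsum_indicator (l : list nat) j0 (c : nat -> R) : NoDup l -> In j0 l ->
  Rsum (map (fun j => if Nat.eqb j j0 then c j else 0) l) = c j0.
Proof.
  induction l; simpl; intros Hn Hi; [contradiction |].
  inversion Hn; subst.
  destruct Hi as [-> | Hi].
  - rewrite Nat.eqb_refl. rewrite Rsum_zero; [lra |].
    intros x Hx. destruct (Nat.eqb_spec x j0); subst; [contradiction | auto].
  - destruct (Nat.eqb_spec a j0); subst; [contradiction |]. rewrite IHl; auto; lra.
Qed.

Lemma Rsum_swap {A B} (l1 : list A) (l2 : list B) F :
  Rsum (map (fun i => Rsum (map (fun j => F i j) l2)) l1) =
  Rsum (map (fun j => Rsum (map (fun i => F i j) l1)) l2).
Proof.
  induction l1; simpl.
  - symmetry; apply Rsum_zero; auto.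
  - rewrite IHl1, <- Rsum_add. reflexivity.
Qed.

Lemma Rsum_filter {A} (l : list A) (P : A -> bool) F :
  Rsum (map F (filter P l)) = Rsum (map (fun x => if P x then F x else 0) l).
Proof. induction l; simpl; auto. destruct (P a); simpl; rewrite IHl; lra. Qed.

Lemma Rsum_pairs E (F : nat -> R) :
  Rsum (map F (seq 0 (2 * E))) =
  Rsum (map (fun n => F (2 * n)%nat + F (2 * n + 1)%nat) (seq 0 E)).
Proof.
  induction E; [reflexivity |].
  replace (2 * S E)%nat with (2 * E + 2)%nat by lia.
  rewrite seq_app, (seq_S E 0), !map_app, !Rsum_app, IHE.
  replace (seq (0 + 2 * E) 2) with [(2 * E)%nat; (2 * E + 1)%nat] by (simpl; f_equal; f_equal; lia).
  replace (0 + E)%nat with E by lia. simpl. lra.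
Qed.

Lemma Rsum_shift (F : nat -> R) s m :
  Rsum (map F (seq s m)) = Rsum (map (fun i => F (s + i)%nat) (seq 0 m)).
Proof.
  assert (H : forall t, Rsum (map F (seq (s + t) m)) =
                        Rsum (map (fun i => F (s + i)%nat) (seq t m))).
  { induction m; intros t; simpl; auto.
    rewrite <- IHm. replace (S (s + t)) with (s + S t)%nat by lia. reflexivity. }
  rewrite <- H, Nat.add_0_r. reflexivity.
Qed.

Lemma Rsum_split (F : nat -> R) k m :
  Rsum (map F (seq 0 (k + m))) =
  Rsum (map F (seq 0 k)) + Rsum (map (fun i => F (k + i)%nat) (seq 0 m)).
Proof. rewrite seq_app, map_app, Rsum_app, (Rsum_shift F (0 + k)). reflexivity. Qed.

(** Linear algebra in R^E: a rank bound for orthogonal complements *)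

Definition vec_indep (E p : nat) (cs : nat -> nat -> R) : Prop :=
  forall d : nat -> R,
    (forall n, (n < E)%nat -> Rsum (map (fun i => d i * cs i n) (seq 0 p)) = 0) ->
    forall i, (i < p)%nat -> d i = 0.

Definition orth_rows (E r : nat) (M : nat -> nat -> R) (c : nat -> R) : Prop :=
  forall i, (i < r)%nat -> Rsum (map (fun n => c n * M i n) (seq 0 E)) = 0.

Module OrthComplement.
Import all_boot all_algebra Rstruct.
Import GRing.Theory.
Local Open Scope ring_scope.

(* Statements below spell out Peano [lt], [le], [Nat.add], [Nat.sub], so that
   they read the same outside this module. *)

Lemma RsumE (F : nat -> R) k : Rsum (map F (List.seq 0 k)) = \sum_(i < k) F i.
Proof.
suff gen s : Rsum (map F (List.seq s k)) = \sum_(i < k) F (s + i)%N by rewrite gen.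
elim: k s => [|k IH] s /=; first by rewrite big_ord0.
rewrite big_ord_recl /= IH addn0.
by congr (_ + _)%R; apply: eq_bigr => i _; rewrite /= addSnnS.
Qed.

(* Coordinates of a row vector, extended by 0 outside its length. *)
Definition coord {k : nat} (u : 'rV[R]_k) (i : nat) : R :=
  match @insub nat (fun x => x < k)%N _ i with Some ii => u 0 ii | None => 0 end.

Lemma coordE k (u : 'rV[R]_k) (i : 'I_k) : coord u i = u 0 i.
Proof. by rewrite /coord valK. Qed.

Lemma row_free_of_inj r E (A : 'M[R]_(r, E)) :
  (forall u : 'rV_r, u *m A = 0 -> u = 0) -> row_free A.
Proof.
move=> H; rewrite -kermx_eq0; apply/eqP/row_matrixP => i; rewrite row0.
by apply: H; apply/sub_kermxP; exact: row_sub.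
Qed.

Lemma row_free_vec_indep E r M :
  vec_indep E r M -> row_free (\matrix_(i < r, n < E) M i n).
Proof.
move=> HM; apply: row_free_of_inj => u Hu; apply/rowP => i; rewrite mxE -coordE.
apply: HM; last exact/ltP/ltn_ord.
move=> n /ltP ltn; rewrite RsumE.
transitivity ((u *m (\matrix_(i < r, n < E) M i n)) 0 (Ordinal ltn)); last by rewrite Hu mxE.
by rewrite mxE; apply: eq_bigr => j _; rewrite mxE coordE.
Qed.

Lemma orth_complement_bound E r M p cs : vec_indep E r M ->
  (forall i, lt i p -> orth_rows E r M (cs i)) ->
  vec_indep E p cs -> le (Nat.add p r) E.
Proof.
move=> HM Ho Hl.
set Mx := \matrix_(i < r, n < E) M i n.
set C := \matrix_(i < p, n < E) cs i n.
have fM : row_free Mx := row_free_vec_indep _ _ _ HM.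
have fC : row_free C := row_free_vec_indep _ _ _ Hl.
have sC : (C <= kermx Mx^T)%MS.
  apply/sub_kermxP/matrixP => i j; rewrite [RHS]mxE.
  transitivity (Rsum (map (fun n => cs i n * M j n) (List.seq 0 E)));
    last exact: (Ho i (ltP (ltn_ord i)) j (ltP (ltn_ord j))).
  by rewrite RsumE mxE; apply: eq_bigr => n _; rewrite !mxE.
have := mxrankS sC; rewrite mxrank_ker mxrank_tr (eqP fM) (eqP fC) => h.
have hr : (r <= E)%N by rewrite -(eqP fM) rank_leq_col.
by apply/leP; rewrite -(leq_add2r r) subnK in h.
Qed.

Lemma orth_complement_basis E r M : vec_indep E r M ->
  exists cs, (forall i, lt i (Nat.sub E r) -> orth_rows E r M (cs i)) /\
             vec_indep E (Nat.sub E r) cs.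
Proof.
move=> HM.
set Mx := \matrix_(i < r, n < E) M i n.
set K := kermx Mx^T.
have hK : \rank K = Nat.sub E r by rewrite mxrank_ker mxrank_tr (eqP (row_free_vec_indep _ _ _ HM)).
set C := row_base K.
pose cs i n := match @insub nat (fun x => x < \rank K)%N _ i with
  | Some ii => coord (row ii C) n | None => 0 end.
have csE (ii : 'I_(\rank K)) (nn : 'I_E) : cs ii nn = C ii nn.
  by rewrite /cs valK coordE mxE.
have hC : C *m Mx^T = 0 by apply/sub_kermxP; rewrite eq_row_base.
exists cs; split.
  move=> i /ltP; rewrite -hK => hi i' /ltP hi'.
  transitivity ((C *m Mx^T) (Ordinal hi) (Ordinal hi')); last by rewrite hC mxE.
  rewrite RsumE mxE; apply: eq_bigr => n _.
  by rewrite (csE (Ordinal hi) n) !mxE.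
move=> d; rewrite -hK => Hd.
have h0 : \row_(i < \rank K) d i = 0.
  apply: (row_free_inj (row_base_free K)); rewrite mul0mx.
  apply/rowP => n; rewrite [RHS]mxE.
  transitivity (Rsum (map (fun i => d i * cs i n) (List.seq 0 (\rank K))));
    last exact: (Hd n (ltP (ltn_ord n))).
  rewrite RsumE mxE; apply: eq_bigr => i _.
  by rewrite (csE i n) !mxE.
move=> i /ltP hi.
by have := congr1 (fun A : 'rV_(\rank K) => A 0 (Ordinal hi)) h0; rewrite !mxE.
Qed.

End OrthComplement.

Section Endpoints.
Variable G : MetricGraph.

Lemma in_at_v v j : In j (at_v G v) <-> (j < 2 * nE G)%nat /\ vtx G j = v.
Proof. unfold at_v, endpoints. rewrite filter_In, in_seq, Nat.eqb_eq. lia. Qed.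

Lemma ev_left f n : ev G f (2 * n) = f n (ea G n).
Proof. unfold ev. rewrite Nat.even_even, Nat.div2_double. reflexivity. Qed.
Lemma ev_right f n : ev G f (2 * n + 1) = f n (eb G n).
Proof. unfold ev. rewrite Nat.even_odd, Nat.div2_odd'. reflexivity. Qed.
Lemma dev_left g n : dev G g (2 * n) = g n (ea G n).
Proof. unfold dev. rewrite Nat.even_even, Nat.div2_double. reflexivity. Qed.
Lemma dev_right g n : dev G g (2 * n + 1) = - g n (eb G n).
Proof. unfold dev. rewrite Nat.even_odd, Nat.div2_odd'. reflexivity. Qed.

Lemma endpoint_cases j : (j < 2 * nE G)%nat ->
  exists n, (n < nE G)%nat /\ (j = 2 * n \/ j = 2 * n + 1)%nat.
Proof.
  intros H. destruct (Nat.Even_or_Odd j) as [[n ->] | [n ->]]; exists n; split; try lia; auto.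
Qed.

Lemma Rsum_by_vertex (F : nat -> R) l : (forall j, In j l -> (vtx G j < nV G)%nat) ->
  Rsum (map F l) =
  Rsum (map (fun v => Rsum (map F (filter (fun j => Nat.eqb (vtx G j) v) l))) (seq 0 (nV G))).
Proof.
  induction l as [| a l IH]; intros H.
  - simpl. symmetry; apply Rsum_zero; auto.
  - simpl. rewrite IH by (intros; apply H; right; auto).
    transitivity (Rsum (map (fun v => (if Nat.eqb v (vtx G a) then F a else 0) +
       Rsum (map F (filter (fun j => Nat.eqb (vtx G j) v) l))) (seq 0 (nV G)))).
    + rewrite Rsum_add. f_equal. symmetry.
      apply (Rsum_indicator (seq 0 (nV G)) (vtx G a) (fun _ => F a)).
      apply seq_NoDup. apply in_seq. specialize (H a (or_introl eq_refl)). lia.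
    + apply Rsum_ext. intros v _. rewrite (Nat.eqb_sym v).
      destruct (Nat.eqb (vtx G a) v); simpl; lra.
Qed.

Lemma Rsum_endpoints_by_vertex (F : nat -> R) :
  Rsum (map F (endpoints G)) = Rsum (map (fun v => Rsum (map F (at_v G v))) (seq 0 (nV G))).
Proof.
  apply Rsum_by_vertex. intros j Hj. unfold endpoints in Hj. apply in_seq in Hj.
  apply vtx_range. lia.
Qed.

(* The boundary term Σ_j f(x_j) ∂g(x_j) of Green's formula. *)
Definition boundary_form (f g : nat -> R -> R) : R :=
  Rsum (map (fun j => ev G f j * dev G g j) (endpoints G)).

(* The boundary term vanishes under both vertex conditions: vertex by vertex,
   either one factor vanishes at every endpoint, or one factor is constant and
   the other sums to zero. *)
Lemma boundary_form_StD B f g : StD G B f g -> boundary_form f g = 0.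
Proof.
  intros H. unfold boundary_form. rewrite Rsum_endpoints_by_vertex.
  apply Rsum_zero. intros v Hv. apply in_seq in Hv.
  destruct (H v ltac:(lia)) as [H1 H2]. destruct (B v) eqn:Bv.
  - apply Rsum_zero. intros j Hj. rewrite (H1 eq_refl j Hj). lra.
  - destruct (H2 eq_refl) as [Hc Hs]. destruct (at_v G v) as [| j0 l] eqn:E; [reflexivity |].
    rewrite (Rsum_ext _ _ (fun j => ev G f j0 * dev G g j)).
    + rewrite Rsum_scal, Hs. lra.
    + intros j Hj. rewrite (Hc j j0); auto. left; auto.
Qed.

Lemma boundary_form_AstN B f g : AstN G B f g -> boundary_form f g = 0.
Proof.
  intros H. unfold boundary_form. rewrite Rsum_endpoints_by_vertex.
  apply Rsum_zero. intros v Hv. apply in_seq in Hv.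
  destruct (H v ltac:(lia)) as [H1 H2]. destruct (B v) eqn:Bv.
  - apply Rsum_zero. intros j Hj. rewrite (H1 eq_refl j Hj). lra.
  - destruct (H2 eq_refl) as [Hs Hc]. destruct (at_v G v) as [| j0 l] eqn:E; [reflexivity |].
    rewrite (Rsum_ext _ _ (fun j => dev G g j0 * ev G f j)).
    + rewrite Rsum_scal, Hs. lra.
    + intros j Hj. rewrite (Hc j j0); auto. lra. left; auto.
Qed.

Lemma connected_ind (P : nat -> Prop) b0 : connected G -> (b0 < nV G)%nat -> P b0 ->
  (forall u w, adj G u w -> P u -> P w) -> forall w, (w < nV G)%nat -> P w.
Proof.
  intros Hc Hb Hp Hs w Hw. specialize (Hc b0 w Hb Hw).
  clear Hb Hw. revert Hp. induction Hc; intros Hp; eauto.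
Qed.

End Endpoints.

Lemma deriv_const_on_interval (phi : R -> R) a b x l : a < b ->
  (forall y, a <= y <= b -> phi y = phi a) ->
  a <= x <= b -> derivable_pt_lim phi x l -> l = 0.
Proof.
  intros hab Hc Hx Hd. destruct (Req_dec l 0) as [| Hl]; auto. exfalso.
  destruct (Hd (Rabs l) (Rabs_pos_lt l Hl)) as [[d Hdp] Hdl]. simpl in Hdl.
  (* a difference quotient over a step h of size ≤ d/2 staying inside [a, b] *)
  assert (Hstep : exists h, h <> 0 /\ Rabs h < d /\ a <= x + h <= b).
  { destruct (Rlt_le_dec x b) as [Hxb | Hxb].
    - exists (Rmin (d / 2) (b - x)).
      assert (0 < Rmin (d / 2) (b - x)) by (apply Rmin_pos; lra).
      assert (Rmin (d / 2) (b - x) <= d / 2) by apply Rmin_l.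
      assert (Rmin (d / 2) (b - x) <= b - x) by apply Rmin_r.
      rewrite Rabs_pos_eq by lra. repeat split; lra.
    - exists (- Rmin (d / 2) (b - a)).
      assert (0 < Rmin (d / 2) (b - a)) by (apply Rmin_pos; lra).
      assert (Rmin (d / 2) (b - a) <= d / 2) by apply Rmin_l.
      assert (Rmin (d / 2) (b - a) <= b - a) by apply Rmin_r.
      rewrite Rabs_Ropp, Rabs_pos_eq by lra. repeat split; lra. }
  destruct Hstep as [h [Hh0 [Hhd Hxh]]].
  specialize (Hdl h Hh0 Hhd). rewrite (Hc (x + h)), (Hc x) in Hdl by lra.
  replace ((phi a - phi a) / h - l) with (- l) in Hdl by (field; auto).
  rewrite Rabs_Ropp in Hdl. lra.
Qed.

Lemma nondecreasing_of_deriv (phi phi' : R -> R) :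
  (forall x, derivable_pt_lim phi x (phi' x)) -> (forall x, 0 <= phi' x) ->
  forall x y, x <= y -> phi x <= phi y.
Proof.
  intros Hd Hp x y Hxy. destruct (Req_dec x y) as [-> | Hne]; [lra |].
  destruct (MVT_cor2 phi phi' x y ltac:(lra) (fun c _ => Hd c)) as [c [Hc _]].
  specialize (Hp c). nra.
Qed.

Lemma deriv_lin_comb (l : list nat) (d : nat -> R) (F F' : nat -> R -> R) x :
  (forall i, In i l -> derivable_pt_lim (F i) x (F' i x)) ->
  derivable_pt_lim (fun y => Rsum (map (fun i => d i * F i y) l)) x
                   (Rsum (map (fun i => d i * F' i x) l)).
Proof.
  induction l as [| a l IH]; intros H; simpl.
  - apply derivable_pt_lim_const.
  - apply (derivable_pt_lim_plus (fun y => d a * F a y)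
                                 (fun y => Rsum (map (fun i => d i * F i y) l))).
    + apply (derivable_pt_lim_scal (F a) (d a)). apply H; left; auto.
    + apply IH. intros; apply H; right; auto.
Qed.

Lemma deriv_lin_relation G K (Fs Fs' : nat -> nat -> R -> R) d :
  (forall i n x, (i < K)%nat -> (n < nE G)%nat -> derivable_pt_lim (Fs i n) x (Fs' i n x)) ->
  (forall n x, (n < nE G)%nat -> ea G n <= x <= eb G n ->
     Rsum (map (fun i => d i * Fs i n x) (seq 0 K)) = 0) ->
  forall n x, (n < nE G)%nat -> ea G n <= x <= eb G n ->
    Rsum (map (fun i => d i * Fs' i n x) (seq 0 K)) = 0.
Proof.
  intros Hd Hz n x Hn Hx.
  assert (hab := edge_pos G n Hn).
  assert (Hsum := deriv_lin_comb (seq 0 K) d (fun i => Fs i n) (fun i => Fs' i n) x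
    ltac:(intros i Hi; apply in_seq in Hi; apply Hd; auto; lia)).
  cbv beta in Hsum. refine (deriv_const_on_interval _ _ _ x _ hab _ Hx Hsum).
  intros y Hy. rewrite (Hz n y Hn Hy), (Hz n (ea G n) Hn); [reflexivity | lra].
Qed.

Lemma solution_const_on_edge G lam f g n : solves G lam f g -> (n < nE G)%nat ->
  (forall x, ea G n <= x <= eb G n -> g n x = 0) ->
  forall x, ea G n <= x <= eb G n -> f n x = f n (ea G n).
Proof.
  intros Hs Hn Hg x Hx. destruct (Req_dec x (ea G n)) as [-> | Hne]; auto.
  destruct (MVT_cor2 (f n) (g n) (ea G n) x ltac:(lra)) as [c [Hc Hc2]].
  - intros c Hc. apply (Hs n c Hn).
  - rewrite Hg in Hc by lra. lra.
Qed.

(** The energy argument *)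

(* Green's formula: if the boundary term vanishes and λ ≤ 0, then f' = 0 on
   every edge, and f = 0 if λ < 0.  Indeed (f f')' = f'^2 - λ f^2 ≥ 0, so f f' is
   nondecreasing on each edge, while the sum over edges of its increments is
   minus the boundary term, 0; hence f f' is constant and (f f')' = 0. *)
Lemma energy G lam f g :
  boundary_form G f g = 0 -> lam <= 0 -> solves G lam f g ->
  forall n x, (n < nE G)%nat -> ea G n <= x <= eb G n ->
    g n x = 0 /\ (lam < 0 -> f n x = 0).
Proof.
  intros Hb Hl Hs.
  assert (Hd : forall n x, (n < nE G)%nat -> derivable_pt_lim (fun y => f n y * g n y) x
                      (g n x * g n x + f n x * (- lam * f n x))).
  { intros n x Hn. destruct (Hs n x Hn) as [H1 H2].
    exact (derivable_pt_lim_mult _ _ _ _ _ H1 H2). }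
  assert (Hm : forall n, (n < nE G)%nat -> forall x y, x <= y -> f n x * g n x <= f n y * g n y).
  { intros n Hn. apply (nondecreasing_of_deriv _ (fun x => g n x * g n x + f n x * (- lam * f n x))).
    - intros x; apply Hd; auto.
    - intros x. nra. }
  set (incr := fun n => f n (eb G n) * g n (eb G n) - f n (ea G n) * g n (ea G n)).
  assert (Hincr : forall n, In n (seq 0 (nE G)) -> 0 <= incr n).
  { intros n Hn. apply in_seq in Hn. specialize (Hm n ltac:(lia) (ea G n) (eb G n)).
    assert (ea G n < eb G n) by (apply edge_pos; lia). unfold incr. lra. }
  assert (Hsum : Rsum (map incr (seq 0 (nE G))) = 0).
  { unfold boundary_form, endpoints in Hb. rewrite Rsum_pairs in Hb.
    rewrite (Rsum_ext _ _ (fun n => - incr n)) in Hb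
      by (intros n _; unfold incr; rewrite ev_left, ev_right, dev_left, dev_right; lra).
    rewrite Rsum_opp in Hb. lra. }
  intros n x Hn Hx.
  assert (hab := edge_pos G n Hn).
  assert (Hz := Rsum_nonneg_zero _ incr Hincr Hsum n ltac:(apply in_seq; lia)).
  assert (Hc : forall y, ea G n <= y <= eb G n -> f n y * g n y = f n (ea G n) * g n (ea G n)).
  { intros y Hy. assert (h1 := Hm n Hn (ea G n) y ltac:(lra)).
    assert (h2 := Hm n Hn y (eb G n) ltac:(lra)). unfold incr in Hz. lra. }
  assert (H0 := deriv_const_on_interval _ _ _ _ _ hab Hc Hx (Hd n x Hn)).
  split.
  - nra.
  - intros Hlt. assert (0 <= g n x * g n x) by nra. assert (0 <= f n x * f n x) by nra.
    assert (f n x * f n x = 0) by nra. nra.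
Qed.

(* An eigenfunction of L^{st,D}(Γ,B) with λ ≤ 0 on a connected graph with
   B ≠ ∅ vanishes: by the energy argument it is edgewise constant (and 0 if
   λ < 0); continuity at standard vertices spreads the value 0 from a
   Dirichlet vertex to the whole graph. *)
Lemma StD_nonpos_trivial G B lam f g b0 : connected G -> B b0 = true -> (b0 < nV G)%nat ->
  lam <= 0 -> is_eigenpair G (StD G B) lam f g ->
  forall n x, (n < nE G)%nat -> ea G n <= x <= eb G n -> f n x = 0.
Proof.
  intros Hcon Hb0 Hb0V Hl [Hs Hc].
  assert (He := energy G lam f g (boundary_form_StD G B f g Hc) Hl Hs).
  destruct (Rle_lt_dec 0 lam) as [Hl0 | Hl0].
  2:{ intros n x Hn Hx. apply (He n x Hn Hx); auto. }
  assert (Hconst : forall n, (n < nE G)%nat -> forall x, ea G n <= x <= eb G n -> f n x = f n (ea G n)).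
  { intros n Hn. apply (solution_const_on_edge G lam f g n Hs Hn). intros x Hx. apply (He n x Hn Hx). }
  assert (Hab : forall n, (n < nE G)%nat -> ev G f (2 * n) = ev G f (2 * n + 1)).
  { intros n Hn. rewrite ev_left, ev_right. symmetry; apply Hconst; auto.
    assert (ea G n < eb G n) by (apply edge_pos; auto). lra. }
  set (vanishes_at := fun w => forall j, (j < 2 * nE G)%nat -> vtx G j = w -> ev G f j = 0).
  assert (HP : forall w, (w < nV G)%nat -> vanishes_at w).
  { apply (connected_ind G vanishes_at b0 Hcon Hb0V).
    - intros j Hj Hv. destruct (Hc b0 Hb0V) as [H1 _]. apply (H1 Hb0). apply in_at_v; auto.
    - intros u w [n [Hn Hor]] Hu j Hj Hv.
      assert (Hw : exists jw, (jw < 2 * nE G)%nat /\ vtx G jw = w /\ ev G f jw = 0).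
      { destruct Hor as [[H1 H2] | [H1 H2]].
        - exists (2 * n + 1)%nat. split; [lia | split; auto]. rewrite <- Hab by auto. apply Hu; auto; lia.
        - exists (2 * n)%nat. split; [lia | split; auto]. rewrite Hab by auto. apply Hu; auto; lia. }
      destruct Hw as [jw [Hjw1 [Hjw2 Hjw3]]].
      assert (HwV : (w < nV G)%nat) by (subst w; apply vtx_range; auto).
      destruct (Hc w HwV) as [H1 H2]. destruct (B w) eqn:Bw.
      + apply (H1 eq_refl). apply in_at_v; auto.
      + destruct (H2 eq_refl) as [H3 _]. rewrite (H3 j jw); auto; apply in_at_v; auto. }
  intros n x Hn Hx. rewrite Hconst by auto. rewrite <- ev_left.
  apply (HP (vtx G (2 * n))); [apply vtx_range | |]; lia.
Qed.

(** The kernel of L^{a/st,N} *)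

(* Edgewise constants c (c n on edge n) satisfying the anti-standard condition:
   Σ_{x_j ∈ v} c(edge of x_j) = 0 at every vertex v ∉ B. *)
Definition ast_constants G B (c : nat -> R) : Prop :=
  forall v, (v < nV G)%nat -> B v = false -> Rsum (map (fun j => c (Nat.div2 j)) (at_v G v)) = 0.

Lemma AstN_zero_mode G B f g : is_eigenpair G (AstN G B) 0 f g ->
  (forall n x, (n < nE G)%nat -> ea G n <= x <= eb G n -> f n x = f n (ea G n)) /\
  ast_constants G B (fun n => f n (ea G n)).
Proof.
  intros [Hs Hc].
  assert (He := energy G 0 f g (boundary_form_AstN G B f g Hc) ltac:(lra) Hs).
  assert (Hconst : forall n, (n < nE G)%nat -> forall x, ea G n <= x <= eb G n -> f n x = f n (ea G n)).
  { intros n Hn. apply (solution_const_on_edge G 0 f g n Hs Hn). intros x Hx. apply (He n x Hn Hx). }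
  split; [intros; apply Hconst; auto |].
  intros v Hv Bv. destruct (Hc v Hv) as [_ H2]. destruct (H2 Bv) as [H3 _].
  rewrite <- H3. apply Rsum_ext. intros j Hj. apply in_at_v in Hj. destruct Hj as [Hj _].
  destruct (endpoint_cases G j Hj) as [n [Hn [-> | ->]]].
  - rewrite ev_left, Nat.div2_double. auto.
  - rewrite ev_right, Nat.div2_odd'. symmetry; apply Hconst; auto.
    assert (ea G n < eb G n) by (apply edge_pos; auto). lra.
Qed.

Lemma AstN_zero_mode_of_constants G B c : ast_constants G B c ->
  is_eigenpair G (AstN G B) 0 (fun n _ => c n) (fun _ _ => 0).
Proof.
  intros Hk. split.
  - intros n x Hn. split.
    + apply derivable_pt_lim_const.
    + replace (- 0 * c n) with 0 by ring. apply derivable_pt_lim_const.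
  - intros v Hv. split.
    + intros _ j _. unfold dev. destruct (Nat.even j); lra.
    + intros Bv. split.
      * rewrite <- (Hk v Hv Bv). apply Rsum_ext. intros j _. unfold ev. destruct (Nat.even j); auto.
      * intros i j _ _. unfold dev. destruct (Nat.even i), (Nat.even j); lra.
Qed.

Definition free_vertices G (B : nat -> bool) : list nat :=
  filter (fun v => negb (B v)) (seq 0 (nV G)).

(* Number of endpoints of edge n lying at vertex v (0, 1, or 2 for a loop). *)
Definition incidence G v n : R :=
  (if Nat.eqb (vtx G (2 * n)) v then 1 else 0) + (if Nat.eqb (vtx G (2 * n + 1)) v then 1 else 0).

Definition free_incidence G B i n : R := incidence G (nth i (free_vertices G B) 0%nat) n.

Lemma free_vertices_spec G B v : In v (free_vertices G B) <-> (v < nV G)%nat /\ B v = false.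
Proof.
  unfold free_vertices. rewrite filter_In, in_seq, Bool.negb_true_iff.
  split; intros [H1 H2]; split; auto; lia.
Qed.

Lemma free_vertices_length G B :
  (length (free_vertices G B) + length (filter B (seq 0 (nV G))) = nV G)%nat.
Proof. unfold free_vertices. rewrite Nat.add_comm, filter_length, length_seq. reflexivity. Qed.

Lemma Rsum_at_v_incidence G v c : Rsum (map (fun j => c (Nat.div2 j)) (at_v G v)) =
  Rsum (map (fun n => c n * incidence G v n) (seq 0 (nE G))).
Proof.
  unfold at_v, endpoints. rewrite Rsum_filter, Rsum_pairs. apply Rsum_ext. intros n _.
  rewrite Nat.div2_double, Nat.div2_odd'. unfold incidence.
  destruct (Nat.eqb (vtx G (2 * n)) v), (Nat.eqb (vtx G (2 * n + 1)) v); lra.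
Qed.

Lemma ast_constants_orth G B c :
  ast_constants G B c <-> orth_rows (nE G) (length (free_vertices G B)) (free_incidence G B) c.
Proof.
  split.
  - intros Hk i Hi. unfold free_incidence. rewrite <- Rsum_at_v_incidence.
    assert (Hin : In (nth i (free_vertices G B) 0%nat) (free_vertices G B)) by (apply nth_In; lia).
    apply free_vertices_spec in Hin. apply Hk; tauto.
  - intros Ho v Hv Bv. rewrite Rsum_at_v_incidence.
    assert (Hin : In v (free_vertices G B)) by (apply free_vertices_spec; auto).
    destruct (In_nth _ _ 0%nat Hin) as [i [Hi Hiv]].
    specialize (Ho i Hi). unfold free_incidence in Ho. rewrite Hiv in Ho. exact Ho.
Qed.

(* On a connected graph with B ≠ ∅ the rows of free_incidence are independent:
   a relation y with Σ_v y_v incidence(v, n) = 0 for every edge n, extended by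
   0 to B, gives Y(u) + Y(w) = 0 along every edge uw, so Y ≡ 0 from a vertex of B. *)
Lemma free_incidence_indep G B b0 : connected G -> B b0 = true -> (b0 < nV G)%nat ->
  vec_indep (nE G) (length (free_vertices G B)) (free_incidence G B).
Proof.
  intros Hcon Hb0 Hb0V y Hy.
  set (r := length (free_vertices G B)). set (w := fun i => nth i (free_vertices G B) 0%nat).
  set (Y := fun v => Rsum (map (fun i => if Nat.eqb (w i) v then y i else 0) (seq 0 r))).
  assert (HY : forall n, (n < nE G)%nat -> Y (vtx G (2 * n)) + Y (vtx G (2 * n + 1)) = 0).
  { intros n Hn. rewrite <- (Hy n Hn). unfold Y. rewrite <- Rsum_add. apply Rsum_ext. intros i _.
    unfold free_incidence, incidence. fold (w i). rewrite (Nat.eqb_sym (w i)), (Nat.eqb_sym (w i)).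
    destruct (Nat.eqb (vtx G (2 * n)) (w i)), (Nat.eqb (vtx G (2 * n + 1)) (w i)); lra. }
  assert (HB : forall v, B v = true -> Y v = 0).
  { intros v Bv. apply Rsum_zero. intros i Hi. apply in_seq in Hi.
    destruct (Nat.eqb_spec (w i) v) as [Heq |]; auto.
    assert (Hin : In (w i) (free_vertices G B)) by (apply nth_In; lia).
    apply free_vertices_spec in Hin. rewrite Heq in Hin. destruct Hin; congruence. }
  assert (Hw : forall i0, (i0 < r)%nat -> Y (w i0) = y i0).
  { intros i0 Hi0. unfold Y. rewrite (Rsum_ext _ _ (fun i => if Nat.eqb i i0 then y i else 0)).
    - apply Rsum_indicator. apply seq_NoDup. apply in_seq; lia.
    - intros i Hi. apply in_seq in Hi.
      destruct (Nat.eqb_spec (w i) (w i0)) as [Heq | Hne], (Nat.eqb_spec i i0) as [| Hne']; subst; auto.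
      + exfalso. apply Hne'.
        apply (proj1 (NoDup_nth (free_vertices G B) 0%nat) (NoDup_filter _ (seq_NoDup _ _))); auto; lia.
      + congruence. }
  assert (HZ : forall v, (v < nV G)%nat -> Y v = 0).
  { apply (connected_ind G (fun v => Y v = 0) b0 Hcon Hb0V (HB b0 Hb0)).
    intros u v [n [Hn [[H1 H2] | [H1 H2]]]] Hu; specialize (HY n Hn); subst; lra. }
  intros i Hi. rewrite <- Hw by auto. apply HZ.
  assert (Hin : In (w i) (free_vertices G B)) by (apply nth_In; lia).
  apply free_vertices_spec in Hin. tauto.
Qed.

Lemma free_vertices_le_edges G B b0 : connected G -> B b0 = true -> (b0 < nV G)%nat ->
  (length (free_vertices G B) <= nE G)%nat.
Proof.
  intros Hcon Hb0 Hb0V.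
  assert (H := OrthComplement.orth_complement_bound _ _ _ 0%nat (fun _ _ => 0)
                 (free_incidence_indep G B b0 Hcon Hb0 Hb0V)
                 ltac:(intros; lia) ltac:(intros d _ i Hi; lia)).
  simpl in H. exact H.
Qed.

(* ... and, taking B a single vertex, a connected graph has V ≤ E + 1, i.e. β = E + 1 - V. *)
Lemma vertices_le_edges_succ G b0 : connected G -> (b0 < nV G)%nat -> (nV G <= nE G + 1)%nat.
Proof.
  intros Hc Hb.
  assert (H := free_vertices_le_edges G (fun v => Nat.eqb v b0) b0 Hc (Nat.eqb_refl b0) Hb).
  assert (H2 := free_vertices_length G (fun v => Nat.eqb v b0)).
  assert (H3 : length (filter (fun v => Nat.eqb v b0) (seq 0 (nV G))) = 1%nat).
  { assert (Hin : In b0 (filter (fun v => Nat.eqb v b0) (seq 0 (nV G))))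
      by (apply filter_In; rewrite in_seq, Nat.eqb_refl; split; [lia | auto]).
    assert (Hsingle : forall v, In v (filter (fun v => Nat.eqb v b0) (seq 0 (nV G))) -> v = b0)
      by (intros v Hv; apply filter_In in Hv; apply Nat.eqb_eq; tauto).
    assert (Hnd := NoDup_filter (fun v => Nat.eqb v b0) (seq_NoDup (nV G) 0)).
    destruct (filter (fun v => Nat.eqb v b0) (seq 0 (nV G))) as [| a [| a' l]]; simpl; auto.
    - contradiction.
    - exfalso. inversion Hnd as [| ? ? Hnotin _]; subst. apply Hnotin. left.
      rewrite (Hsingle a), (Hsingle a') by (simpl; auto). reflexivity. }
  lia.
Qed.

(** The sign transform on a bipartite graph *)

Definition sign (col : nat -> bool) v : R := if col v then 1 else -1.

Definition signed G col (u : nat -> R -> R) : nat -> R -> R :=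
  fun n x => sign col (vtx G (2 * n)) * u n x.

Definition scaled (c : R) (u : nat -> R -> R) : nat -> R -> R := fun n x => c * u n x.

Lemma sign_nonzero col v : sign col v <> 0.
Proof. unfold sign; destruct (col v); lra. Qed.

Lemma ev_scaled G c u j : ev G (scaled c u) j = c * ev G u j.
Proof. unfold ev, scaled. destruct (Nat.even j); ring. Qed.
Lemma dev_scaled G c u j : dev G (scaled c u) j = c * dev G u j.
Proof. unfold dev, scaled. destruct (Nat.even j); ring. Qed.

Section SignTransform.
Variable G : MetricGraph.
Variable col : nat -> bool.
Hypothesis Hbip : forall n, (n < nE G)%nat -> col (vtx G (2 * n)) <> col (vtx G (2 * n + 1)).

Lemma sign_right n : (n < nE G)%nat -> sign col (vtx G (2 * n + 1)) = - sign col (vtx G (2 * n)).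
Proof.
  intros Hn. specialize (Hbip n Hn). unfold sign.
  destruct (col (vtx G (2 * n))), (col (vtx G (2 * n + 1))); try lra; congruence.
Qed.

(* Because colours alternate along edges, the edge sign of the left endpoint
   times the orientation sign of ∂ is the colour sign of the endpoint's vertex:
   values and normal derivatives are exchanged, up to that vertex sign. *)
Lemma ev_signed u j : (j < 2 * nE G)%nat -> ev G (signed G col u) j = sign col (vtx G j) * dev G u j.
Proof.
  intros Hj. destruct (endpoint_cases G j Hj) as [n [Hn [-> | ->]]].
  - rewrite ev_left, dev_left. reflexivity.
  - rewrite ev_right, dev_right, sign_right by auto. unfold signed. ring.
Qed.

Lemma dev_signed u j : (j < 2 * nE G)%nat -> dev G (signed G col u) j = sign col (vtx G j) * ev G u j.
Proof.
  intros Hj. destruct (endpoint_cases G j Hj) as [n [Hn [-> | ->]]].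
  - rewrite ev_left, dev_left. reflexivity.
  - rewrite ev_right, dev_right, sign_right by auto. unfold signed. ring.
Qed.

Lemma StD_to_AstN B lam f g : is_eigenpair G (StD G B) lam f g ->
  is_eigenpair G (AstN G B) lam (signed G col g) (signed G col (scaled (- lam) f)).
Proof.
  intros [Hs Hc]. split.
  - intros n x Hn. destruct (Hs n x Hn) as [H1 H2]. split.
    + exact (derivable_pt_lim_scal (g n) _ x _ H2).
    + assert (H3 := derivable_pt_lim_scal (f n) (- lam) x _ H1).
      assert (H4 := derivable_pt_lim_scal (fun y => - lam * f n y) (sign col (vtx G (2 * n))) x _ H3).
      unfold signed, scaled. replace (- lam * (sign col (vtx G (2 * n)) * g n x)) with
        (sign col (vtx G (2 * n)) * (- lam * g n x)) by ring. exact H4.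
  - intros v Hv. destruct (Hc v Hv) as [H1 H2]. split.
    + intros Bv j Hj. pose proof Hj as Hj'. apply in_at_v in Hj'. destruct Hj' as [Hj1 _].
      rewrite dev_signed, ev_scaled, (H1 Bv j Hj) by auto. ring.
    + intros Bv. destruct (H2 Bv) as [H3 H4]. split.
      * rewrite (Rsum_ext _ _ (fun j => sign col v * dev G g j)).
        -- rewrite Rsum_scal, H4. ring.
        -- intros j Hj. apply in_at_v in Hj. destruct Hj as [Hj1 Hj2].
           rewrite ev_signed, Hj2 by auto. reflexivity.
      * intros i j Hi Hj. pose proof Hi as Hi'. pose proof Hj as Hj'.
        apply in_at_v in Hi'. apply in_at_v in Hj'.
        rewrite !dev_signed, !ev_scaled by tauto. rewrite (H3 i j Hi Hj).
        destruct Hi' as [_ ->]. destruct Hj' as [_ ->]. reflexivity.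
Qed.

Lemma AstN_to_StD B lam h g : lam <> 0 -> is_eigenpair G (AstN G B) lam h g ->
  is_eigenpair G (StD G B) lam (signed G col (scaled (- / lam) g)) (signed G col h).
Proof.
  intros Hl [Hs Hc]. split.
  - intros n x Hn. destruct (Hs n x Hn) as [H1 H2]. split.
    + assert (H3 := derivable_pt_lim_scal (g n) (- / lam) x _ H2).
      assert (H4 := derivable_pt_lim_scal (fun y => - / lam * g n y) (sign col (vtx G (2 * n))) x _ H3).
      unfold signed, scaled. replace (h n x) with (- / lam * (- lam * h n x)) by (field; auto).
      exact H4.
    + assert (H4 := derivable_pt_lim_scal (h n) (sign col (vtx G (2 * n))) x _ H1).
      unfold signed, scaled. replace (- lam * (sign col (vtx G (2 * n)) * (- / lam * g n x))) with
        (sign col (vtx G (2 * n)) * g n x) by (field; auto). exact H4.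
  - intros v Hv. destruct (Hc v Hv) as [H1 H2]. split.
    + intros Bv j Hj. pose proof Hj as Hj'. apply in_at_v in Hj'. destruct Hj' as [Hj1 _].
      rewrite ev_signed, dev_scaled, (H1 Bv j Hj) by auto. ring.
    + intros Bv. destruct (H2 Bv) as [H3 H4]. split.
      * intros i j Hi Hj. pose proof Hi as Hi'. pose proof Hj as Hj'.
        apply in_at_v in Hi'. apply in_at_v in Hj'.
        rewrite !ev_signed, !dev_scaled by tauto. rewrite (H4 i j Hi Hj).
        destruct Hi' as [_ ->]. destruct Hj' as [_ ->]. reflexivity.
      * rewrite (Rsum_ext _ _ (fun j => sign col v * ev G h j)).
        -- rewrite Rsum_scal, H3. ring.
        -- intros j Hj. apply in_at_v in Hj. destruct Hj as [Hj1 Hj2].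
           rewrite dev_signed, Hj2 by auto. reflexivity.
Qed.

End SignTransform.

Lemma lin_indep_nonzero G k fs i : lin_indep G k fs -> (i < k)%nat ->
  ~ (forall n x, (n < nE G)%nat -> ea G n <= x <= eb G n -> fs i n x = 0).
Proof.
  intros Hl Hi Hz.
  assert (H1 : (if Nat.eqb i i then 1 else 0) = 0).
  { apply (Hl (fun j => if Nat.eqb j i then 1 else 0)); auto. intros n x Hn Hx.
    rewrite (Rsum_ext _ _ (fun j => if Nat.eqb j i then fs j n x else 0)).
    - rewrite Rsum_indicator; auto. apply seq_NoDup. apply in_seq; lia.
    - intros j _. destruct (Nat.eqb j i); ring. }
  rewrite Nat.eqb_refl in H1. lra.
Qed.

Definition selection (k K : nat) (sel : nat -> nat) : Prop :=
  (forall j, (j < k)%nat -> (sel j < K)%nat) /\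
  (forall j1 j2, (j1 < k)%nat -> (j2 < k)%nat -> sel j1 = sel j2 -> j1 = j2).

Lemma selection_le k k' K sel : (k' <= k)%nat -> selection k K sel -> selection k' K sel.
Proof. intros Hk [Hr Hi]. split; intros; [apply Hr | apply Hi]; auto; lia. Qed.

Lemma filter_selection K (P : nat -> bool) :
  selection (length (filter P (seq 0 K))) K (fun j => nth j (filter P (seq 0 K)) 0%nat) /\
  forall j, (j < length (filter P (seq 0 K)))%nat -> P (nth j (filter P (seq 0 K)) 0%nat) = true.
Proof.
  assert (Hin : forall j, (j < length (filter P (seq 0 K)))%nat ->
            (nth j (filter P (seq 0 K)) 0 < K)%nat /\ P (nth j (filter P (seq 0 K)) 0%nat) = true).
  { intros j Hj. apply (nth_In _ 0%nat), filter_In in Hj. rewrite in_seq in Hj. split; [lia | tauto]. }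
  split; [split |]; try apply Hin.
  apply NoDup_nth. apply NoDup_filter, seq_NoDup.
Qed.

Lemma lin_indep_select G K fs k sel : lin_indep G K fs -> selection k K sel ->
  lin_indep G k (fun j => fs (sel j)).
Proof.
  intros Hl [Hs Hinj] d Hd.
  (* the coefficient of fs i in the relation is the sum of d j over sel j = i *)
  set (c := fun i => Rsum (map (fun j => if Nat.eqb (sel j) i then d j else 0) (seq 0 k))).
  assert (Hc : forall i, (i < K)%nat -> c i = 0).
  { apply Hl. intros n x Hn Hx. rewrite <- (Hd n x Hn Hx). unfold c.
    rewrite (Rsum_ext _ _ (fun i => Rsum (map (fun j =>
               (if Nat.eqb (sel j) i then d j else 0) * fs i n x) (seq 0 k))))
      by (intros; symmetry; apply Rsum_scal_r).
    rewrite Rsum_swap. apply Rsum_ext. intros j Hj. apply in_seq in Hj.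
    rewrite (Rsum_ext _ _ (fun i => if Nat.eqb i (sel j) then d j * fs i n x else 0)).
    - rewrite (Rsum_indicator _ (sel j) (fun i => d j * fs i n x)); auto. apply seq_NoDup. apply in_seq.
      specialize (Hs j ltac:(lia)). lia.
    - intros i _. rewrite (Nat.eqb_sym (sel j)). destruct (Nat.eqb i (sel j)); ring. }
  intros j0 Hj0. rewrite <- (Hc (sel j0)) by auto. unfold c.
  rewrite (Rsum_ext _ _ (fun j => if Nat.eqb j j0 then d j else 0)).
  - rewrite Rsum_indicator; auto. apply seq_NoDup. apply in_seq; lia.
  - intros j Hj. apply in_seq in Hj.
    destruct (Nat.eqb_spec (sel j) (sel j0)) as [Heq | Hne], (Nat.eqb_spec j j0) as [| Hne']; subst; auto.
    + exfalso. apply Hne'. apply Hinj; auto; lia.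
    + congruence.
Qed.

Lemma lin_indep_rescale G k (Hs Fs : nat -> nat -> R -> R) (s c : nat -> R) :
  (forall n, (n < nE G)%nat -> s n <> 0) -> (forall i, (i < k)%nat -> c i <> 0) ->
  (forall i n x, (i < k)%nat -> (n < nE G)%nat -> Fs i n x = s n * (c i * Hs i n x)) ->
  lin_indep G k Hs -> lin_indep G k Fs.
Proof.
  intros Hs0 Hc0 HF Hl d Hz.
  assert (H : forall i, (i < k)%nat -> d i * c i = 0).
  { apply Hl. intros n x Hn Hx. specialize (Hz n x Hn Hx).
    rewrite (Rsum_ext _ _ (fun i => s n * (d i * c i * Hs i n x))) in Hz
      by (intros i Hi; apply in_seq in Hi; rewrite HF by (auto; lia); ring).
    rewrite Rsum_scal in Hz. apply Rmult_integral in Hz.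
    destruct Hz as [Hz | Hz]; [exfalso; exact (Hs0 n Hn Hz) | exact Hz]. }
  intros i Hi. specialize (H i Hi). apply Rmult_integral in H.
  destruct H as [H | H]; [exact H | exfalso; exact (Hc0 i Hi H)].
Qed.

Lemma lin_indep_of_deriv G k (Fs Fs' : nat -> nat -> R -> R) :
  (forall i n x, (i < k)%nat -> (n < nE G)%nat -> derivable_pt_lim (Fs i n) x (Fs' i n x)) ->
  lin_indep G k Fs' -> lin_indep G k Fs.
Proof. intros Hd Hl d Hz. apply Hl. exact (deriv_lin_relation G k Fs Fs' d Hd Hz). Qed.

Definition glue {A} (k : nat) (F H : nat -> A) (i : nat) : A :=
  if Nat.ltb i k then F i else H (i - k)%nat.

(* Appending independent edgewise constants to a family with independent
   derivatives keeps it independent: differentiating a relation kills the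
   constants and forces the first k coefficients to vanish. *)
Lemma lin_indep_glue_constants G k m (Fs Fs' : nat -> nat -> R -> R) (cs : nat -> nat -> R) :
  (forall i n x, (i < k)%nat -> (n < nE G)%nat -> derivable_pt_lim (Fs i n) x (Fs' i n x)) ->
  lin_indep G k Fs' -> vec_indep (nE G) m cs ->
  lin_indep G (k + m) (glue k Fs (fun i n _ => cs i n)).
Proof.
  intros Hd Hl Hcs d Hz.
  assert (Hd' := deriv_lin_relation G (k + m) (glue k Fs (fun i n _ => cs i n))
                  (glue k Fs' (fun _ _ _ => 0)) d
    ltac:(intros i n x Hi Hn; unfold glue; destruct (Nat.ltb_spec i k);
          [apply Hd; auto | apply derivable_pt_lim_const]) Hz).
  assert (Hfirst : forall i, (i < k)%nat -> d i = 0).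
  { apply Hl. intros n x Hn Hx. specialize (Hd' n x Hn Hx).
    rewrite Rsum_split, (Rsum_zero (seq 0 m)), Rplus_0_r in Hd'.
    - rewrite <- Hd'. apply Rsum_ext. intros i Hi. apply in_seq in Hi.
      unfold glue. destruct (Nat.ltb_spec i k); [reflexivity | lia].
    - intros i _. unfold glue. destruct (Nat.ltb_spec (k + i) k); [lia | ring]. }
  assert (Hsecond : forall i, (i < m)%nat -> d (k + i)%nat = 0).
  { apply (Hcs (fun i => d (k + i)%nat)). intros n Hn.
    assert (hab := edge_pos G n Hn).
    specialize (Hz n (ea G n) Hn ltac:(lra)).
    rewrite Rsum_split, (Rsum_zero (seq 0 k)), Rplus_0_l in Hz.
    - rewrite <- Hz. apply Rsum_ext. intros i _. unfold glue.
      destruct (Nat.ltb_spec (k + i) k); [lia |]. replace (k + i - k)%nat with i by lia. reflexivity.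
    - intros i Hi. apply in_seq in Hi. rewrite Hfirst by lia. ring. }
  intros i Hi. destruct (Nat.ltb_spec i k); auto.
  replace i with (k + (i - k))%nat by lia. apply Hsecond. lia.
Qed.

(** Counting eigenvalues *)

(* E - (number of vertices outside B): the dimension of the kernel of L^{a/st,N}. *)
Definition ast_kernel_dim G B : nat := (nE G - length (free_vertices G B))%nat.

Lemma ast_kernel_dim_betti G B b0 : connected G -> B b0 = true -> (b0 < nV G)%nat ->
  (betti G + cardB G B = ast_kernel_dim G B + 1)%nat.
Proof.
  intros Hcon Hb0 Hb0V.
  assert (Hlen := free_vertices_length G B).
  assert (HV := vertices_le_edges_succ G b0 Hcon Hb0V).
  assert (Hfree := free_vertices_le_edges G B b0 Hcon Hb0 Hb0V).
  assert (HcardB : (1 <= cardB G B)%nat).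
  { unfold cardB. assert (Hin : In b0 (filter B (seq 0 (nV G))))
      by (apply filter_In; split; auto; apply in_seq; lia).
    destruct (filter B (seq 0 (nV G))); simpl in *; [contradiction | lia]. }
  unfold betti, ast_kernel_dim, cardB in *. lia.
Qed.

Section Counting.
Variable G : MetricGraph.
Variable B : nat -> bool.
Variable col : nat -> bool.
Hypothesis Hcon : connected G.
Hypothesis Hbip : forall n, (n < nE G)%nat -> col (vtx G (2 * n)) <> col (vtx G (2 * n + 1)).
Variable b0 : nat.
Hypothesis Hb0 : B b0 = true.
Hypothesis Hb0V : (b0 < nV G)%nat.

Lemma StD_eigenvalue_pos k mu fs gs i : lin_indep G k fs -> (i < k)%nat ->
  is_eigenpair G (StD G B) mu (fs i) (gs i) -> 0 < mu.
Proof.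
  intros Hl Hi Hp. destruct (Rle_lt_dec mu 0) as [Hle |]; auto. exfalso.
  exact (lin_indep_nonzero G k fs i Hl Hi (StD_nonpos_trivial G B mu (fs i) (gs i) b0 Hcon Hb0 Hb0V Hle Hp)).
Qed.

(* Independent 0-eigenfunctions of L^{a/st,N} number at most ast_kernel_dim:
   their edge constants are independent and orthogonal to the free incidence rows. *)
Lemma AstN_zero_modes_bound p (hs gs : nat -> nat -> R -> R) :
  (forall i, (i < p)%nat -> is_eigenpair G (AstN G B) 0 (hs i) (gs i)) ->
  lin_indep G p hs -> (p <= ast_kernel_dim G B)%nat.
Proof.
  intros Hp Hl.
  assert (Hbound := OrthComplement.orth_complement_bound _ _ _ p (fun i n => hs i n (ea G n))
    (free_incidence_indep G B b0 Hcon Hb0 Hb0V)).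
  unfold ast_kernel_dim. enough (Nat.add p (length (free_vertices G B)) <= nE G)%nat by lia.
  apply Hbound.
  - intros i Hi. apply ast_constants_orth. exact (proj2 (AstN_zero_mode G B _ _ (Hp i Hi))).
  - intros d Hd. apply Hl. intros n x Hn Hx. rewrite <- (Hd n Hn). apply Rsum_ext.
    intros i Hi. apply in_seq in Hi.
    rewrite (proj1 (AstN_zero_mode G B _ _ (Hp i ltac:(lia))) n x Hn Hx). reflexivity.
Qed.

(* k eigenvalues ≤ μ0 of L^{st,D} give k + ast_kernel_dim eigenvalues ≤ μ0 of
   L^{a/st,N}: the sign transforms of the eigenpairs (whose derivatives are
   multiples of the independent eigenfunctions), completed by a basis of the kernel. *)
Lemma count_StD_to_AstN mu0 k : (1 <= k)%nat -> count_ge G (StD G B) mu0 k ->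
  count_ge G (AstN G B) mu0 (k + ast_kernel_dim G B).
Proof.
  intros Hk [mu [fs [gs [Hp Hl]]]].
  assert (Hpos : forall i, (i < k)%nat -> 0 < mu i)
    by (intros i Hi; exact (StD_eigenvalue_pos k (mu i) fs gs i Hl Hi (proj2 (Hp i Hi)))).
  assert (Hmu0 : 0 <= mu0) by (specialize (Hpos 0%nat ltac:(lia)); specialize (Hp 0%nat ltac:(lia)); lra).
  destruct (OrthComplement.orth_complement_basis _ _ _ (free_incidence_indep G B b0 Hcon Hb0 Hb0V))
    as [cs [Hcs Hci]].
  exists (glue k mu (fun _ => 0)).
  exists (glue k (fun i => signed G col (gs i)) (fun i n _ => cs i n)).
  exists (glue k (fun i => signed G col (scaled (- mu i) (fs i))) (fun _ _ _ => 0)).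
  split.
  - intros i Hi. unfold glue. destruct (Nat.ltb_spec i k).
    + destruct (Hp i ltac:(auto)) as [H1 H2]. split; auto. apply StD_to_AstN; auto.
    + split; auto. apply AstN_zero_mode_of_constants, ast_constants_orth, Hcs.
      unfold ast_kernel_dim in Hi. lia.
  - apply lin_indep_glue_constants with (Fs' := fun i => signed G col (scaled (- mu i) (fs i))).
    + intros i n x Hi Hn.
      destruct (StD_to_AstN G col Hbip B (mu i) (fs i) (gs i) (proj2 (Hp i Hi))) as [Hs _].
      exact (proj1 (Hs n x Hn)).
    + apply (lin_indep_rescale G k fs _ (fun n => sign col (vtx G (2 * n))) (fun i => - mu i)).
      * intros n _. apply sign_nonzero.
      * intros i Hi. specialize (Hpos i Hi). lra.
      * intros i n x _ _. reflexivity.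
      * exact Hl.
    + exact Hci.
Qed.

(* Conversely, among k + ast_kernel_dim independent eigenpairs of L^{a/st,N}
   at most ast_kernel_dim have eigenvalue 0; the inverse sign transform of k of
   the others gives k independent eigenpairs of L^{st,D}. *)
Lemma count_AstN_to_StD mu0 k : count_ge G (AstN G B) mu0 (k + ast_kernel_dim G B) ->
  count_ge G (StD G B) mu0 k.
Proof.
  intros [mu [hs [gs [Hp Hl]]]].
  set (K := (k + ast_kernel_dim G B)%nat) in *.
  set (is_zero := fun i => if Req_EM_T (mu i) 0 then true else false).
  destruct (filter_selection K is_zero) as [HselZ HZ].
  destruct (filter_selection K (fun i => negb (is_zero i))) as [HselN HN].
  set (Z := filter is_zero (seq 0 K)) in *. set (N := filter (fun i => negb (is_zero i)) (seq 0 K)) in *.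
  assert (Hlen : (length Z + length N = K)%nat) by (unfold Z, N; rewrite filter_length, length_seq; auto).
  assert (HZbound : (length Z <= ast_kernel_dim G B)%nat).
  { apply (AstN_zero_modes_bound _ (fun j => hs (nth j Z 0%nat)) (fun j => gs (nth j Z 0%nat))).
    - intros j Hj. specialize (HZ j Hj). unfold is_zero in HZ.
      destruct (Req_EM_T (mu (nth j Z 0%nat)) 0) as [Hz |]; [| discriminate].
      rewrite <- Hz. apply Hp, HselZ, Hj.
    - exact (lin_indep_select G K hs _ _ Hl HselZ). }
  set (sel := fun j => nth j N 0%nat).
  assert (Hsel : selection k K sel) by (apply (selection_le (length N)); [lia | exact HselN]).
  assert (Hnz : forall j, (j < k)%nat -> mu (sel j) <> 0).
  { intros j Hj. specialize (HN j ltac:(lia)). unfold is_zero in HN. unfold sel.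
    destruct (Req_EM_T (mu (nth j N 0%nat)) 0); [simpl in HN; discriminate | assumption]. }
  exists (fun j => mu (sel j)).
  exists (fun j => signed G col (scaled (- / mu (sel j)) (gs (sel j)))).
  exists (fun j => signed G col (hs (sel j))).
  split.
  - intros j Hj. destruct (Hp (sel j) (proj1 Hsel j Hj)) as [H1 H2].
    split; auto. apply AstN_to_StD; auto.
  - apply lin_indep_of_deriv with (Fs' := fun j => signed G col (hs (sel j))).
    + intros j n x Hj Hn.
      destruct (AstN_to_StD G col Hbip B _ _ _ (Hnz j Hj) (proj2 (Hp (sel j) (proj1 Hsel j Hj))))
        as [Hs _].
      exact (proj1 (Hs n x Hn)).
    + apply (lin_indep_rescale G k (fun j => hs (sel j)) _
               (fun n => sign col (vtx G (2 * n))) (fun _ => 1)).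
      * intros n _. apply sign_nonzero.
      * intros. lra.
      * intros j n x _ _. unfold signed. ring.
      * exact (lin_indep_select G K hs k sel Hl Hsel).
Qed.

End Counting.

Lemma kth_eigenvalue_transfer G C1 C2 k1 k2 lam :
  (forall mu, count_ge G C1 mu k1 <-> count_ge G C2 mu k2) ->
  is_kth_eigenvalue G C1 k1 lam <-> is_kth_eigenvalue G C2 k2 lam.
Proof.
  intros Heq. unfold is_kth_eigenvalue.
  split; intros [H1 H2]; split; try apply Heq; auto;
    intros mu Hmu Hc; apply (H2 mu Hmu), Heq; auto.
Qed.

Theorem mainTheorem9 (G : MetricGraph) (B : nat -> bool) :
  connected G -> bipartite G ->
  (forall v, B v = true -> (v < nV G)%nat /\ degree G v = 1%nat) ->
  (exists v, B v = true) ->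
  forall k : nat, (1 <= k)%nat -> forall lam : R,
    is_kth_eigenvalue G (AstN G B) (k + betti G + cardB G B - 1)%nat lam <->
    is_kth_eigenvalue G (StD G B) k lam.
Proof.
  intros Hcon [col Hbip] HB [b0 Hb0] k Hk lam.
  destruct (HB b0 Hb0) as [Hb0V _].
  assert (Hdim := ast_kernel_dim_betti G B b0 Hcon Hb0 Hb0V).
  replace (k + betti G + cardB G B - 1)%nat with (k + ast_kernel_dim G B)%nat by lia.
  apply kth_eigenvalue_transfer. intros mu. split.
  - apply (count_AstN_to_StD G B col Hcon Hbip b0 Hb0 Hb0V).
  - apply (count_StD_to_AstN G B col Hcon Hbip b0 Hb0 Hb0V); auto.
Qed.
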